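(* Let $G=(V,E,w_G)$ be any weighted undirected graph, let $\varepsilon\in(0,1)$, let $H=(V,E_H,w_H)$ be a $(1\pm\varepsilon)$-cut sparsifier of $G$, let $\beta\in(0,1)$ and let $\mathcal T$ be any $\beta$-balanced HC-tree on the vertex set $V$. Then $$(1-\varepsilon)\cdot\beta\cdot C_G(\mathcal T)\;\le\; C_H(\mathcal T)\;\le\;(1+\varepsilon)\cdot\frac{1}{\beta}\cdot C_G(\mathcal T).$$
   Context: Let $G=(V,E,w)$ be an undirected graph with nonnegative edge weights $w$. A hierarchical clustering tree (HC-tree) of $G$ is a rooted tree $\mathcal T$ whose leaves are in bijection with $V$. For a node $z$, $\mathcal T[z]$ is the subtree rooted at $z$ and $\mathrm{leaves}(\mathcal T[z])\subseteq V$ its set of leaves. For $u,v\in V$, $u\vee v$ denotes their lowest common ancestor in $\mathcal T$. The cost of $\mathcal T$ on $G$ is $C_G(\mathcal T)=\sum_{(u,v)\in E} w(u,v)\,|\mathrm{leaves}(\mathcal T[u\vee v])|$. For disjoint $A,B\subseteq V$, $w(A,B)$ denotes the total weight of edges with one endpoint in $A$ and the other in $B$, and $\bar A=V\setminus A$. If $\mathcal T$ is binary and $z$ is an internal node with children $z_1,z_2$, where $|\mathrm{leaves}(\mathcal T[z_1])|\le|\mathrm{leaves}(\mathcal T[z_2])|$, then $\mathrm{cut}(\mathcal T[z]):=(A,B)$ with $A=\mathrm{leaves}(\mathcal T[z_1])$, $B=\mathrm{leaves}(\mathcal T[z_2])$. For $0<\beta<1$, a pair of disjoint sets $(A,B)$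 is $\beta$-balanced if $\max\{|A|,|B|\}\le(1-\beta)|A\cup B|$; a binary HC-tree is $\beta$-balanced if $\mathrm{cut}(\mathcal T[z])$ is $\beta$-balanced for every internal node $z$. A weighted graph $H=(V,E_H,w_H)$ with $E_H\subseteq E$ is a $(1\pm\varepsilon)$-cut sparsifier of $G=(V,E,w_G)$ if for every nonempty $A\subsetneq V$: $(1-\varepsilon)w_G(A,\bar A)\le w_H(A,\bar A)\le(1+\varepsilon)w_G(A,\bar A)$. *)

From mathcomp Require Import all_boot all_order all_algebra.
Set Implicit Arguments. Unset Strict Implicit. Unset Printing Implicit Defensive.
Import Order.TTheory GRing.Theory Num.Theory.
Local Open Scope ring_scope.

Section HC.
Variable V : finType.
Variable R : realFieldType.

(* A weighted undirected graph on V: a symmetric nonnegative weight function;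
   w u v (u <> v) is the weight of edge {u,v}, 0 meaning "no edge".
   Self-loop values w u u are ignored (simple graphs). *)
Definition weighted_graph (w : V -> V -> R) : Prop :=
  (forall u v, w u v = w v u) /\ (forall u v, 0 <= w u v).

Definition edge_subset (wH wG : V -> V -> R) : Prop :=
  forall u v, u != v -> wH u v != 0 -> wG u v != 0.

Definition cut_weight (w : V -> V -> R) (A : {set V}) : R :=
  \sum_(u in A) \sum_(v in ~: A) w u v.

Definition cut_sparsifier (eps : R) (wH wG : V -> V -> R) : Prop :=
  edge_subset wH wG /\
  forall A : {set V}, A != set0 -> A != [set: V] ->
    (1 - eps) * cut_weight wG A <= cut_weight wH A /\
    cut_weight wH A <= (1 + eps) * cut_weight wG A.

Inductive bintree : Type :=
| Leaf of V
| Node of bintree & bintree.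

Fixpoint leaves (t : bintree) : seq V :=
  match t with
  | Leaf v => [:: v]
  | Node l r => leaves l ++ leaves r
  end.

Definition is_HC_tree (t : bintree) : Prop :=
  uniq (leaves t) /\ forall v : V, v \in leaves t.

Fixpoint lca_size (t : bintree) (u v : V) : nat :=
  match t with
  | Leaf _ => size (leaves t)
  | Node l r =>
      if (u \in leaves l) && (v \in leaves l) then lca_size l u v
      else if (u \in leaves r) && (v \in leaves r) then lca_size r u v
      else size (leaves t)
  end.

(* C_G(T) = sum over edges {u,v} of w(u,v) |leaves(T[u \/ v])|;
   each unordered pair is counted twice in the ordered sum, hence the 1/2. *)
Definition hc_cost (w : V -> V -> R) (t : bintree) : R :=
  2^-1 * \sum_(u : V) \sum_(v : V | u != v) w u v * (lca_size t u v)%:R.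

Fixpoint balanced (beta : R) (t : bintree) : Prop :=
  match t with
  | Leaf _ => True
  | Node l r =>
      (Num.max (size (leaves l))%:R (size (leaves r))%:R
         <= (1 - beta) * (size (leaves l) + size (leaves r))%:R)
      /\ balanced beta l /\ balanced beta r
  end.

End HC.

From mathcomp Require Import all_boot all_order all_algebra.
From mathcomp Require Import zify.
Set Implicit Arguments. Unset Strict Implicit. Unset Printing Implicit Defensive.
Import Order.TTheory GRing.Theory Num.Theory.

(* Give every subtree [s] the weight |leaves s'| of its sibling [s'], and every
   leaf an additional weight 1. For distinct leaves u, v the subtrees whose leaf
   set separates u from v then have total weight 2 |leaves(T[u \/ v])|: the two
   children of u \/ v contribute |leaves(T[u \/ v])|, and along the path from a
   child c down to u (or v) the sibling weights add up to |leaves c| - 1.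
   Hence 2 C(T) is the nonnegative combination of the cut weights w(A, ~A) of
   these leaf sets with these weights, so a (1 +- eps)-cut sparsifier preserves
   C(T) up to a factor 1 +- eps, and the factors beta and 1/beta are slack. *)

Section SeparationCount.
Variable V : finType.

Definition separates (A : {set V}) (u v : V) : bool := (u \in A) != (v \in A).

Fixpoint weighted_subtrees (t : bintree V) : seq (nat * {set V}) :=
  match t with
  | Leaf x => [:: (1%N, [set x])]
  | Node l r => (size (leaves r), [set x in leaves l])
                :: (size (leaves l), [set x in leaves r])
                :: weighted_subtrees l ++ weighted_subtrees r
  end.

Definition separation_count (t : bintree V) (u v : V) : nat :=
  \sum_(p <- weighted_subtrees t) p.1 * separates p.2 u v.

Lemma separation_count_Node l r u v :
  separation_count (Node l r) u v =
  size (leaves r) * ((u \in leaves l) != (v \in leaves l)) +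
  size (leaves l) * ((u \in leaves r) != (v \in leaves r)) +
  separation_count l u v + separation_count r u v.
Proof. by rewrite /separation_count /= !big_cons big_cat /separates !inE !addnA. Qed.

Lemma separation_countC t u v : separation_count t u v = separation_count t v u.
Proof. by apply: eq_bigr => p _; rewrite /separates eq_sym. Qed.

Lemma disjoint_seq_memNr (s1 s2 : seq V) x :
  ~~ has (mem s1) s2 -> x \in s1 -> x \notin s2.
Proof. by move=> /hasPn s12 xs1; apply/negP => /s12/negP; apply. Qed.

Lemma disjoint_seq_memNl (s1 s2 : seq V) x :
  ~~ has (mem s1) s2 -> x \in s2 -> x \notin s1.
Proof. by move=> /hasPn s12 /s12. Qed.

Lemma separation_count_notin t u v :
  u \notin leaves t -> v \notin leaves t -> separation_count t u v = 0%N.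
Proof.
elim: t => [x|l IHl r IHr] /=.
  by rewrite !inE => ux vx; rewrite /separation_count big_seq1 /separates !inE
    (negbTE ux) (negbTE vx).
rewrite !mem_cat !negb_or => /andP[ul ur] /andP[vl vr].
by rewrite separation_count_Node IHl // IHr // (negbTE ul) (negbTE ur)
  (negbTE vl) (negbTE vr) !muln0.
Qed.

Lemma separation_count_mem_notin t u v : uniq (leaves t) ->
  u \in leaves t -> v \notin leaves t -> separation_count t u v = size (leaves t).
Proof.
elim: t => [x|l IHl r IHr] /=.
  by rewrite !inE => _ /eqP-> vx; rewrite /separation_count big_seq1 /separates
    !inE eqxx eq_sym (negbTE vx).
rewrite cat_uniq => /and3P[Ul Dlr Ur].
rewrite !mem_cat negb_or separation_count_Node size_cat => uin /andP[vl vr].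
rewrite (negbTE vl) (negbTE vr).
case/orP: uin => [ul|ur].
  have ur := disjoint_seq_memNr Dlr ul.
  by rewrite ul (negbTE ur) (separation_count_notin ur vr) IHl //; lia.
have ul := disjoint_seq_memNl Dlr ur.
by rewrite ur (negbTE ul) (separation_count_notin ul vl) IHr //; lia.
Qed.

Lemma separation_count_lca t u v : uniq (leaves t) -> u != v ->
  u \in leaves t -> v \in leaves t ->
  separation_count t u v = (2 * lca_size t u v)%N.
Proof.
elim: t => [x|l IHl r IHr] /=.
  by move=> _ uv /[!inE] /eqP eu /eqP ev; rewrite eu ev eqxx in uv.
rewrite cat_uniq => /and3P[Ul Dlr Ur] uv.
have Nr z := @disjoint_seq_memNr _ _ z Dlr.
have Nl z := @disjoint_seq_memNl _ _ z Dlr.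
rewrite !mem_cat separation_count_Node size_cat.
case/orP=> [ul|ur]; case/orP=> [vl|vr].
- rewrite ul vl (negbTE (Nr _ ul)) (negbTE (Nr _ vl)) /=.
  by rewrite (separation_count_notin (Nr _ ul) (Nr _ vl)) IHl //; lia.
- rewrite ul vr (negbTE (Nr _ ul)) (negbTE (Nl _ vr)) /=.
  rewrite (separation_count_mem_notin Ul ul (Nl _ vr)) separation_countC.
  by rewrite (separation_count_mem_notin Ur vr (Nr _ ul)); lia.
- rewrite ur vl (negbTE (Nl _ ur)) (negbTE (Nr _ vl)) /=.
  rewrite (separation_count_mem_notin Ur ur (Nr _ vl)) separation_countC.
  by rewrite (separation_count_mem_notin Ul vl (Nl _ ur)); lia.
- rewrite ur vr (negbTE (Nl _ ur)) (negbTE (Nl _ vr)) /=.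
  by rewrite (separation_count_notin (Nl _ ur) (Nl _ vr)) IHr //; lia.
Qed.

Lemma separation_count_diag t u : separation_count t u u = 0%N.
Proof. by rewrite /separation_count big1 // => p _; rewrite /separates eqxx muln0. Qed.

End SeparationCount.

Local Open Scope ring_scope.

Section CutExpansion.
Variables (V : finType) (R : realFieldType).
Implicit Types (w wG wH : V -> V -> R) (t : bintree V) (A : {set V}).

Definition cut_expansion w t : R :=
  \sum_(p <- weighted_subtrees t) p.1%:R * cut_weight w p.2.

Lemma cut_weightE w A :
  cut_weight w A = \sum_u \sum_v w u v * ((u \in A) && (v \notin A))%:R.
Proof.
rewrite /cut_weight big_mkcond; apply: eq_bigr => u _.
case: (u \in A) => /=; last by rewrite big1 // => v _; rewrite mulr0.
by rewrite big_mkcond; apply: eq_bigr => v _; rewrite inE;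
  case: (v \in A); rewrite ?mulr1 ?mulr0.
Qed.

Lemma sum_weight_separates w A : (forall u v, w u v = w v u) ->
  \sum_u \sum_v w u v * (separates A u v)%:R = 2 * cut_weight w A.
Proof.
move=> wC.
have splitE u v : w u v * (separates A u v)%:R =
    w u v * ((u \in A) && (v \notin A))%:R + w v u * ((v \in A) && (u \notin A))%:R.
  by rewrite /separates (wC v u); case: (u \in A); case: (v \in A);
    rewrite ?mulr1 ?mulr0 ?addr0 ?add0r.
under eq_bigr => u _ do under eq_bigr => v _ do rewrite splitE.
under eq_bigr => u _ do rewrite big_split.
by rewrite big_split /= [X in _ + X]exchange_big -!cut_weightE mulr2n mulrDl mul1r.
Qed.

Lemma sum_weight_separation_count w t : (forall u v, w u v = w v u) ->
  \sum_u \sum_v w u v * (separation_count t u v)%:R = 2 * cut_expansion w t.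
Proof.
move=> wC; rewrite /cut_expansion mulr_sumr.
under eq_bigr => u _ do under eq_bigr => v _
  do rewrite /separation_count natr_sum mulr_sumr.
under eq_bigr => u _ do rewrite exchange_big.
rewrite exchange_big; apply: eq_bigr => p _.
rewrite mulrCA -sum_weight_separates // mulr_sumr; apply: eq_bigr => u _.
by rewrite mulr_sumr; apply: eq_bigr => v _; rewrite natrM mulrCA.
Qed.

Lemma hc_cost_cut_expansion w t : (forall u v, w u v = w v u) -> is_HC_tree t ->
  hc_cost w t = 2^-1 * cut_expansion w t.
Proof.
move=> wC [Ut t_all]; congr (_ * _).
apply: (@mulfI _ 2); first by rewrite pnatr_eq0.
rewrite -sum_weight_separation_count // mulr_sumr; apply: eq_bigr => u _.
rewrite [RHS](bigD1 u) //= separation_count_diag mulr0 add0r mulr_sumr.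
apply: eq_big => [v|v uv]; first by rewrite eq_sym.
by rewrite separation_count_lca // natrM mulrCA.
Qed.

Lemma cut_expansion_ge0 w t : (forall u v, 0 <= w u v) -> 0 <= cut_expansion w t.
Proof.
move=> w_ge0; apply: sumr_ge0 => p _; rewrite mulr_ge0 //.
by apply: sumr_ge0 => u _; apply: sumr_ge0.
Qed.

Lemma cut_weight_set0 w : cut_weight w set0 = 0.
Proof. by rewrite /cut_weight big_set0. Qed.

Lemma cut_weight_setT w : cut_weight w [set: V] = 0.
Proof. by rewrite /cut_weight setCT big1 // => u _; rewrite big_set0. Qed.

Lemma cut_sparsifier_bounds (eps : R) wH wG A : cut_sparsifier eps wH wG ->
  (1 - eps) * cut_weight wG A <= cut_weight wH A /\
  cut_weight wH A <= (1 + eps) * cut_weight wG A.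
Proof.
move=> [_ sparse]; have [-> |A0] := eqVneq A set0.
  by rewrite !cut_weight_set0 !mulr0 lexx.
have [-> |AT] := eqVneq A setT; last exact: sparse.
by rewrite !cut_weight_setT !mulr0 lexx.
Qed.

Lemma cut_expansion_sparsifier (eps : R) wH wG t : cut_sparsifier eps wH wG ->
  (1 - eps) * cut_expansion wG t <= cut_expansion wH t /\
  cut_expansion wH t <= (1 + eps) * cut_expansion wG t.
Proof.
move=> sparse; rewrite /cut_expansion !mulr_sumr; split; apply: ler_sum => p _;
  have [lo hi] := cut_sparsifier_bounds p.2 sparse; by rewrite mulrCA ler_wpM2l.
Qed.

End CutExpansion.

Theorem theorem3p1 (V : finType) (R : realFieldType)
  (wG wH : V -> V -> R) (eps beta : R) (t : bintree V) :
  weighted_graph wG -> weighted_graph wH ->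
  0 < eps < 1 ->
  cut_sparsifier eps wH wG ->
  0 < beta < 1 ->
  is_HC_tree t -> balanced beta t ->
  (1 - eps) * beta * hc_cost wG t <= hc_cost wH t /\
  hc_cost wH t <= (1 + eps) * beta^-1 * hc_cost wG t.
Proof.
move=> [wGC wG_ge0] [wHC _] /andP[eps0 eps1] sparse /andP[beta0 beta1] tHC _.
rewrite !hc_cost_cut_expansion //.
have [lo hi] := cut_expansion_sparsifier t sparse.
have QG_ge0 := cut_expansion_ge0 t wG_ge0.
have half_ge0 : 0 <= 2^-1 :> R by rewrite invr_ge0 ler0n.
have lo_ge0 : 0 <= (1 - eps) * cut_expansion wG t by rewrite mulr_ge0 // subr_ge0 ltW.
have hi_ge0 : 0 <= (1 + eps) * cut_expansion wG t by rewrite mulr_ge0 // addr_ge0 // ltW.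
split; rewrite mulrCA ler_wpM2l //.
- apply: le_trans lo; rewrite mulrAC ler_piMr //; exact: ltW.
- by apply: le_trans hi _; rewrite mulrAC ler_peMr // invf_ge1 // ltW.
Qed.
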